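(* Let $p$ be a prime and let $s,g\geq1$ be integers with $s\mid g$. Then $$s\,r\!\left(\tfrac{2g}{s},p\right)+v_p(s!)\leq r(2g,p).$$
   Context: For a prime $p$ and an integer $n\geq1$, $r(n,p)=\sum_{i\geq0}\lfloor n/(p^i(p-1))\rfloor$. *)

From mathcomp Require Import all_boot.
Set Implicit Arguments.
Unset Strict Implicit.
Unset Printing Implicit Defensive.

(* r(n,p) = sum_{i>=0} floor(n / (p^i (p-1))).  For a prime p (p >= 2) and
   any n, every term with i >= n vanishes since p^i (p-1) >= 2^i > i, so the
   infinite sum equals the finite sum over 0 <= i <= n. *)
Definition r (n p : nat) : nat := \sum_(0 <= i < n.+1) n %/ (p ^ i * (p - 1)).

From mathcomp Require Import all_boot.
From mathcomp Require Import zify.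
From Stdlib Require Import Lia.

(* Write d_i = p^i (p-1), so that r(m) = sum_i m / d_i.  Splitting n = q_i d_i + n_i
   gives (s n) / d_i = s q_i + (s n_i) / d_i; the first parts add up to at least
   s r(n).  For the remainders, pick the least j with n < d_j, so that d_j <= p n.
   For i = j + k we have n_i = n and d_i <= p^(k+1) n, hence
   (s n_i) / d_i >= s / p^(k+1); summing over k < s gives Legendre's formula for
   v_p(s!). *)

Lemma leq_sum_subrange (F : nat -> nat) m n m' n' :
  m' <= m -> n <= n' -> \sum_(m <= i < n) F i <= \sum_(m' <= i < n') F i.
Proof. exact: (le_big_nat leqnn (fun a b => leq_addr b a)). Qed.

Lemma divn_mul_divmod s n d :
  0 < d -> s * n %/ d = s * (n %/ d) + s * (n %% d) %/ d.
Proof. by move=> d_gt0; rewrite {1}(divn_eq n d) mulnDr mulnA divnMDl. Qed.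

Section RMul.

Variable p : nat.
Hypothesis p_prime : prime p.

Let d i := p ^ i * (p - 1).

Let p_gt1 : 1 < p. Proof. exact: prime_gt1. Qed.

Lemma d_gt0 i : 0 < d i.
Proof. by rewrite /d muln_gt0 expn_gt0 subn_gt0 p_gt1 ltnW. Qed.

Lemma d_window n : 0 < n -> exists j, [/\ n < d j, d j <= p * n & j <= n].
Proof.
move=> n_gt0.
have n_lt_dn : n < d n.
  by apply: (leq_trans (ltn_expl n p_gt1)); rewrite /d leq_pmulr // subn_gt0.
have [j n_lt_dj j_min] := ex_minnP (ex_intro (fun j => n < d j) n n_lt_dn).
exists j; split=> //; last exact: j_min.
case: j n_lt_dj j_min => [|j] _ j_min.
  by rewrite /d expn0 mul1n (leq_trans (leq_subr 1 p)) // leq_pmulr.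
have : ~~ (n < d j) by apply/negP => /j_min; rewrite ltnn.
by rewrite -leqNgt /d expnS -mulnA leq_mul2l => ->; rewrite orbT.
Qed.

Lemma logn_fact_le_window s n j : n < d j -> d j <= p * n ->
  logn p s`! <= \sum_(j <= i < j + s) s * (n %% d i) %/ d i.
Proof.
move=> n_lt_dj dj_le_pn.
have n_gt0 : 0 < n.
  by move: (leq_trans (d_gt0 j) dj_le_pn); rewrite muln_gt0 => /andP[].
rewrite logn_fact // big_add1 -{1}[j]add0n big_addn addKn.
apply: leq_sum => k _.
have dkj : d (k + j) = p ^ k * d j by rewrite /d expnD mulnA.
have n_lt_dkj : n < d (k + j).
  by rewrite dkj (leq_trans n_lt_dj) // leq_pmull // expn_gt0 ltnW.
have dkj_le : d (k + j) <= p ^ k.+1 * n.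
  by rewrite dkj expnSr -mulnA leq_mul2l dj_le_pn orbT.
rewrite modn_small // -(divnMr n_gt0).
exact: leq_div2l (d_gt0 _) dkj_le.
Qed.

Lemma leq_r_mul s n : 0 < s -> 0 < n ->
  s * r n p + logn p s`! <= r (s * n) p.
Proof.
move=> s_gt0 n_gt0.
have -> : r (s * n) p = \sum_(0 <= i < (s * n).+1) s * (n %/ d i)
                      + \sum_(0 <= i < (s * n).+1) s * (n %% d i) %/ d i.
  by rewrite /r -big_split; apply: eq_bigr => i _; rewrite divn_mul_divmod ?d_gt0.
apply: leq_add.
  by rewrite /r big_distrr leq_sum_subrange // ltnS leq_pmull.
have [j [n_lt_dj dj_le_pn j_le_n]] := d_window _ n_gt0.
apply: (leq_trans (logn_fact_le_window s _ _ n_lt_dj dj_le_pn)).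
by apply: leq_sum_subrange => //; nia.
Qed.

End RMul.

Theorem mainTheorem19 (p s g : nat) :
  prime p -> 0 < s -> 0 < g -> s %| g ->
  s * r ((2 * g) %/ s) p + logn p (s `!) <= r (2 * g) p.
Proof.
move=> p_prime s_gt0 g_gt0 /dvdnP [q g_eq].
have -> : 2 * g = s * (2 * q) by rewrite g_eq; lia.
rewrite mulKn //; apply: leq_r_mul => //.
by move: g_gt0; rewrite g_eq muln_gt0 => /andP[q_gt0 _]; rewrite muln_gt0.
Qed.
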